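(* Let $\mathbf{i}=(i_1,\dots,i_r)$, $\mathbf{j}=(j_1,\dots,j_r)$ be sequences of positive integers with equal sums $N$, and suppose $g=\det M(\mathbf{i};\mathbf{j})$ is nonzero and irreducible. If $r=1$, then $g$ is homogeneous. If $r>1$, then the homogeneous component of $g$ of degree $\deg(g)-1$ is nonzero.
   Context: $M(\mathbf{i};\mathbf{j})$ is the $N\times N$ matrix whose rows are divided into blocks of sizes $i_1,\dots,i_r$ (top to bottom) and columns into blocks of sizes $j_r,\dots,j_1$ (left to right; the block of size $j_t$ is column block $t$). Row block $s$ has an $i_s\times j_s$ matrix $A^s$ of indeterminates in column block $s$; for $s\ge 2$ the matrix $I_{i_s,j_{s-1}}$ in column block $s-1$; zeros in column blocks $t<s-1$; and indeterminates in column blocks $t>s$. $I_{c,d}$ is the $c\times d$ matrix with $1$s on its main diagonal and $0$s elsewhere. All indeterminates are distinct. *)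

From HB Require Import structures.
From mathcomp Require Import all_boot all_order all_algebra.
From mathcomp Require Import mpoly.
Set Implicit Arguments. Unset Strict Implicit. Unset Printing Implicit Defensive.
Import GRing.Theory.
Local Open Scope ring_scope.

Definition pre (s : seq nat) (k : nat) : nat := (\sum_(x <- take k s) x)%N.

(* 0-based index of the block (of sizes s, listed in order) containing position a *)
Definition blk (s : seq nat) (a : nat) : nat :=
  count (fun k => pre s k.+1 <= a)%N (iota 0 (size s)).

(* Row blocks (0-based s) have sizes i_1..i_r top to bottom; column blocks
   listed left to right have sizes j_r,...,j_1, the block at left-to-right
   position u being column block t = r-1-u (0-based). *)
Definition Mij (K : fieldType) (i j : seq nat) (N : nat) : 'M[{mpoly K[N * N]}]_N :=
  \matrix_(a < N, b < N)
    let s := blk i a in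
    let p := (a - pre i s)%N in
    let u := blk (rev j) b in
    let t := ((size j).-1 - u)%N in
    let q := (b - pre (rev j) u)%N in
    if (s <= t)%N then 'X_(mxvec_index a b)
    else if s == t.+1 then (p == q)%:R
    else 0.

Definition irreducible_elt (R : comUnitRingType) (x : R) : Prop :=
  x \isn't a GRing.unit /\
  forall a b : R, x = a * b -> a \is a GRing.unit \/ b \is a GRing.unit.

From HB Require Import structures.
From mathcomp Require Import all_boot all_order all_algebra.
From mathcomp Require Import perm mpoly.
From mathcomp Require Import zify.
Set Implicit Arguments. Unset Strict Implicit. Unset Printing Implicit Defensive.
Import GRing.Theory.

(* Expanding the determinant by the Leibniz formula, each permutation meeting
   no zero entry of M(i;j) contributes a signed monomial, the product of the
   indeterminates it meets, and distinct such permutations give distinct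
   monomials.  So deg g is the maximal number of indeterminates met by such a
   permutation [sg], and it suffices to find one meeting exactly one fewer.
   If [sg] avoids some 1 of an identity block, a transposition routes it
   through that 1 and loses exactly one indeterminate.  Otherwise maximality
   forces [sg] to map the rows having a nonzero entry in column block 1 onto
   that block; M(i;j) is then block triangular up to row and column
   permutations, so g splits into two determinants which both vanish at the
   origin, against irreducibility.  For r = 1 all entries are indeterminates
   and g is homogeneous of degree N. *)

Section BlockIndex.
Implicit Types (s : seq nat) (k x y : nat).

Lemma pre0 s : pre s 0 = 0.
Proof. by rewrite /pre take0 big_nil. Qed.

Lemma pre_cons y s k : pre (y :: s) k.+1 = y + pre s k.
Proof. by rewrite /pre /= big_cons. Qed.

Lemma blk_cons y s x :
  blk (y :: s) x = if x < y then 0 else (blk s (x - y)).+1.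
Proof.
rewrite /blk /= -add1n iotaDl count_map /= pre_cons pre0 addn0.
case: (ltnP x y) => hxy.
  rewrite add0n; apply/eqP; rewrite -leqn0 leqNgt -has_count; apply/negP.
  by case/hasP => k _ /=; rewrite pre_cons; lia.
rewrite add1n; congr (_.+1); apply: eq_count => k /=; rewrite add1n pre_cons; lia.
Qed.

Lemma blk_lt_size s x : x < \sum_(y <- s) y -> blk s x < size s.
Proof.
elim: s x => [|y s IH] x; first by rewrite big_nil.
by rewrite big_cons blk_cons /=; case: (ltnP x y) => // h1 h2; rewrite ltnS IH //; lia.
Qed.

Lemma pre_blk_le s x : pre s (blk s x) <= x.
Proof.
elim: s x => [|y s IH] x; first by rewrite pre0.
rewrite blk_cons; case: (ltnP x y) => h; first by rewrite pre0.
by rewrite pre_cons; have := IH (x - y); lia.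
Qed.

Lemma blk_offset_inj s x y :
  blk s x = blk s y -> x - pre s (blk s x) = y - pre s (blk s y) -> x = y.
Proof. by move=> e; have := pre_blk_le s x; have := pre_blk_le s y; rewrite e; lia. Qed.

Lemma blk_pre s k : k < size s -> 0 < nth 0 s k -> blk s (pre s k) = k.
Proof.
elim: s k => [|y s IH] [|k] //= hk hy; first by rewrite pre0 blk_cons hy.
by rewrite pre_cons blk_cons ltnNge leq_addr /= addKn IH.
Qed.

Lemma pre_lt_sum s k :
  k < size s -> 0 < nth 0 s k -> pre s k < \sum_(y <- s) y.
Proof.
elim: s k => [|y s IH] [|k] //= hk hy; rewrite big_cons ?pre0; first lia.
by rewrite pre_cons ltn_add2l IH.
Qed.

End BlockIndex.

Local Open Scope ring_scope.

Lemma mxvec_index_inj n (a a' b b' : 'I_n) :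
  mxvec_index a b = mxvec_index a' b' -> a = a' /\ b = b'.
Proof. by move/cast_ord_inj/enum_rank_inj => [-> ->]. Qed.

Section PatternDeterminant.
Variables (K : fieldType) (n : nat) (v o : 'I_n -> 'I_n -> bool).

Definition supported (s : 'S_n) := [forall a, v a (s a) || o a (s a)].

Definition term_mon (s : 'S_n) : 'X_{1..n * n} :=
  \big[mnm_add/mnm0]_(a | v a (s a)) U_(mxvec_index a (s a))%MM.

Definition term_deg (s : 'S_n) := #|[set a | v a (s a)]|.

Lemma mdeg_term_mon s : mdeg (term_mon s) = term_deg s.
Proof.
rewrite /term_mon /term_deg mdeg_sum (eq_bigr (fun _ => 1%N)) => [|a _].
  by rewrite sum1_card cardsE.
exact: mdeg1.
Qed.

Lemma term_mon_coord s a b :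
  term_mon s (mxvec_index a b) = (v a (s a) && (s a == b)) :> nat.
Proof.
rewrite /term_mon mnm_sumE.
have [/andP[va /eqP sab]|nv] := boolP (v a (s a) && (s a == b)).
  rewrite (bigD1 a) //= mnm1E sab eqxx big1 ?addn0 // => a' /andP[_ na'].
  by rewrite mnm1E; case: eqP => //= /mxvec_index_inj [ha _]; rewrite ha eqxx in na'.
rewrite big1 // => a' va'; rewrite mnm1E.
by case: eqP => //= /mxvec_index_inj [ha hb]; move: nv; rewrite -ha -hb va' eqxx.
Qed.

Hypothesis o_row : forall a b b', o a b -> o a b' -> b = b'.

(* On a supported permutation, [s a] is read off the monomial when [v a (s a)]
   and is the unique [b] with [o a b] otherwise. *)
Lemma term_mon_inj : {in supported &, injective term_mon}.
Proof.
move=> s t /forallP ss /forallP st e; apply/permP => a.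
have := term_mon_coord s a (s a); have := term_mon_coord t a (s a).
have := term_mon_coord s a (t a); have := term_mon_coord t a (t a).
rewrite e !eqxx !andbT.
case vs: (v a (s a)); case vt: (v a (t a)) => /=.
- by move=> ->; case: eqP.
- by move=> _ _ ->.
- by move=> ->.
move=> _ _ _ _; apply: (@o_row a (s a) (t a)).
  by move: (ss a); rewrite vs.
by move: (st a); rewrite vt.
Qed.

Variable M : 'M[{mpoly K[n * n]}]_n.
Hypothesis M_pattern :
  forall a b, M a b = if v a b then 'X_(mxvec_index a b) else (o a b)%:R.

Lemma prod_pattern (s : 'S_n) :
  \prod_a M a (s a) = if supported s then 'X_[term_mon s] else 0.
Proof.
case: ifP => [/forallP ss | /negbT].
  rewrite /term_mon -mprodXE [RHS]big_mkcond /=; apply: eq_bigr => a _.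
  by rewrite M_pattern; case: ifP => // va; move: (ss a); rewrite va /= => ->.
rewrite negb_forall => /existsP [a]; rewrite negb_or => /andP[na no].
by rewrite (bigD1 a) //= M_pattern (negbTE na) (negbTE no) mul0r.
Qed.

Lemma det_pattern : \det M = \sum_(s | supported s) (-1) ^+ s *: 'X_[term_mon s].
Proof.
rewrite /determinant [RHS]big_mkcond /=; apply: eq_bigr => s _.
by rewrite prod_pattern; case: ifP; rewrite ?mulr0 // scaler_sign mulr_sign.
Qed.

Lemma mcoeff_term_sum (P : pred 'S_n) t : supported t ->
  (\sum_(s | supported s && P s) (-1) ^+ s *: 'X_[term_mon s]
     : {mpoly K[n * n]})@_(term_mon t)
    = if P t then (-1) ^+ t else 0.
Proof.
move=> tsupp; rewrite raddf_sum big_mkcond (bigD1 t) //= tsupp big1 ?addr0.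
  by case: (P t); rewrite ?mcoeffZ ?mcoeffX ?eqxx ?mulr1.
move=> s nst; case: ifP => // /andP[ssupp _]; rewrite mcoeffZ mcoeffX.
case: eqP => [/(term_mon_inj ssupp tsupp) est | _]; last by rewrite mulr0.
by rewrite est eqxx in nst.
Qed.

Lemma mcoeff_det_pattern t : supported t -> (\det M)@_(term_mon t) = (-1) ^+ t.
Proof.
move=> tsupp; have := mcoeff_term_sum predT tsupp.
by under eq_bigl do rewrite andbT; rewrite -det_pattern.
Qed.

Lemma msupp_det_pattern m :
  m \in msupp (\det M) -> exists2 s, supported s & m = term_mon s.
Proof.
rewrite mcoeff_msupp det_pattern raddf_sum /= => nz.
have [s /andP[ssupp /eqP <-] | none] :=
  pickP (fun s => supported s && (term_mon s == m)).
  by exists s.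
move: nz; rewrite big1 ?eqxx // => s ssupp; rewrite mcoeffZ mcoeffX.
by case: eqP => [e | _]; [move: (none s); rewrite ssupp e eqxx | rewrite mulr0].
Qed.

Lemma pihomog_det_pattern d : pihomog mdeg d (\det M) =
  \sum_(s | supported s && (term_deg s == d)) (-1) ^+ s *: 'X_[term_mon s].
Proof.
rewrite det_pattern linear_sum [RHS]big_mkcondr /=; apply: eq_bigr => s _.
rewrite linearZ /= pihomogX (_ : (_ == d) = (term_deg s == d)).
  by case: ifP; rewrite ?scaler0.
exact: (congr1 (eq_op^~ d) (mdeg_term_mon s)).
Qed.

Lemma pihomog_det_pattern_neq0 t :
  supported t -> pihomog mdeg (term_deg t) (\det M) != 0.
Proof.
move=> tsupp; apply/eqP => /(congr1 (mcoeff (term_mon t))).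
rewrite pihomog_det_pattern mcoeff_term_sum // eqxx mcoeff0 => /eqP.
by rewrite signr_eq0.
Qed.

Lemma exists_max_term : \det M != 0 ->
  exists2 s, supported s & forall t, supported t -> (term_deg t <= term_deg s)%N.
Proof.
move=> nz; have [s0 s0supp | none] := pickP supported.
  by have [s ssupp smax] := arg_maxnP term_deg s0supp; exists s.
by move: nz; rewrite det_pattern big_pred0 ?eqxx.
Qed.

Lemma msize_det_pattern s : supported s ->
  (forall t, supported t -> (term_deg t <= term_deg s)%N) ->
  msize (\det M) = (term_deg s).+1.
Proof.
move=> ssupp smax; apply/eqP; rewrite eqn_leq; apply/andP; split.
  rewrite msizeE; apply/bigmax_leqP_seq => m /msupp_det_pattern [t tsupp ->] _.
  by rewrite ltnS mdeg_term_mon smax.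
have : term_mon s \in msupp (\det M).
  by rewrite mcoeff_msupp mcoeff_det_pattern // signr_eq0.
by move/msize_mdeg_lt; rewrite mdeg_term_mon.
Qed.

Lemma det_pattern_homog : (forall a b, v a b) -> \det M \is n.-homog.
Proof.
move=> vT; apply/dhomogP => m /msupp_det_pattern [s _ ->].
transitivity (term_deg s); first exact: mdeg_term_mon.
rewrite /term_deg -[n in RHS]card_ord -cardsT.
by apply: eq_card => a; rewrite !inE vT.
Qed.

End PatternDeterminant.

Lemma exists_perm_prefix n1 n2 (S : {set 'I_(n1 + n2)}) :
  #|S| = n1 -> exists p : 'S_(n1 + n2), forall x, (p x \in S) = (x < n1)%N.
Proof.
move=> cS; have cC : #|~: S| = n2 by have := cardsC S; rewrite cS card_ord; lia.
pose sq := enum S ++ enum (~: S).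
have sq_size : size sq = (n1 + n2)%N by rewrite size_cat -!cardE cS cC.
have sq_uniq : uniq sq.
  rewrite cat_uniq !enum_uniq /= andbT; apply/hasPn => x.
  by rewrite !mem_enum inE => ->.
pose f (x : 'I_(n1 + n2)) := nth x sq x.
have f_inj : injective f.
  move=> x y; rewrite /f (set_nth_default x y) ?sq_size //.
  by move/eqP; rewrite nth_uniq ?sq_size // => /eqP /val_inj.
exists (perm f_inj) => x; rewrite permE /f nth_cat -cardE cS.
case: ltnP => hx; first by rewrite -(mem_enum (mem S)) mem_nth // -cardE cS.
have : nth x (enum (~: S)) (x - n1) \in enum (~: S).
  by rewrite mem_nth // -cardE cC; have := ltn_ord x; lia.
by rewrite mem_enum inE => /negbTE.
Qed.

Lemma det_row0 (R : comPzRingType) n (A : 'M[R]_n) i0 :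
  (forall j, A i0 j = 0) -> \det A = 0.
Proof.
by move=> A0; rewrite (expand_det_row _ i0) big1 // => j _; rewrite A0 mul0r.
Qed.

Lemma det_col0 (R : comPzRingType) n (A : 'M[R]_n) j0 :
  (forall i, A i j0 = 0) -> \det A = 0.
Proof. by move=> A0; rewrite -det_tr (@det_row0 _ _ _ j0) // => i; rewrite mxE. Qed.

Section VanishingFactors.
Variables (R F : comPzRingType) (phi : {rmorphism R -> F}).

(* Permuting rows and columns brings [M] to block upper triangular form, with
   row [x0] in the upper left block and column [y0] in the lower right one. *)
Lemma det_factor_vanishing_split n1 n2 (M : 'M[R]_(n1 + n2))
    (S T : {set 'I_(n1 + n2)}) x0 y0 :
  #|S| = n1 -> #|T| = n1 ->
  (forall a b, a \notin S -> b \in T -> M a b = 0) ->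
  x0 \in S -> (forall b, phi (M x0 b) = 0) ->
  y0 \notin T -> (forall a, phi (M a y0) = 0) ->
  exists P Q, \det M = P * Q /\ phi P = 0 /\ phi Q = 0.
Proof.
move=> cS cT M0 Sx0 x0_0 Ty0 y0_0.
have [p pS] := exists_perm_prefix cS; have [q qT] := exists_perm_prefix cT.
pose M' := row_perm p (col_perm q M).
pose c : R := (-1) ^+ p * (-1) ^+ q.
have detM : \det M = c * \det M'.
  have c2 : c * c = 1 by rewrite /c mulrACA -!expr2 !sqrr_sign mulr1.
  have -> : \det M' = c * \det M.
    by rewrite /M' row_permE col_permE !det_mulmx !det_perm odd_permV mulrA mulrAC.
  by rewrite mulrA c2 mul1r.
have dl0 : dlsubmx M' = 0.
  by apply/matrixP => a b; rewrite !mxE M0 // ?pS ?qT //= -ltnNge leq_addr.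
have x0_row : ((p^-1)%g x0 < n1)%N by rewrite -pS permKV.
have y0_ge : (n1 <= (q^-1)%g y0)%N by rewrite leqNgt -qT permKV.
have y0_col : ((q^-1)%g y0 - n1 < n2)%N by have := ltn_ord ((q^-1)%g y0); lia.
exists (c * \det (ulsubmx M')), (\det (drsubmx M')); split.
  by rewrite detM -{1}(submxK M') dl0 det_ublock mulrA.
split.
  rewrite rmorphM -det_map_mx (@det_row0 _ _ _ (Ordinal x0_row)) ?mulr0 // => b.
  by rewrite !mxE (_ : lshift n2 _ = (p^-1)%g x0) ?permKV ?x0_0 //; apply: val_inj.
rewrite -det_map_mx (@det_col0 _ _ _ (Ordinal y0_col)) // => a.
rewrite !mxE (_ : rshift n1 (Ordinal y0_col) = (q^-1)%g y0) ?permKV ?y0_0 //.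
by apply: val_inj => /=; lia.
Qed.

Lemma det_factor_vanishing n (M : 'M[R]_n) (S T : {set 'I_n}) x0 y0 :
  #|S| = #|T| ->
  (forall a b, a \notin S -> b \in T -> M a b = 0) ->
  x0 \in S -> (forall b, phi (M x0 b) = 0) ->
  y0 \notin T -> (forall a, phi (M a y0) = 0) ->
  exists P Q, \det M = P * Q /\ phi P = 0 /\ phi Q = 0.
Proof.
move=> cST; have [n1 [n2 [en cS]]] : exists n1 n2, n = (n1 + n2)%N /\ #|S| = n1.
  by exists #|S|, (n - #|S|)%N; split => //; have := max_card S; rewrite card_ord; lia.
by subst n; apply: det_factor_vanishing_split; rewrite -?cST.
Qed.

End VanishingFactors.

Lemma vanishing_factors_not_irreducible (R F : comUnitRingType)
    (phi : {rmorphism R -> F}) x P Q :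
  x = P * Q -> phi P = 0 -> phi Q = 0 -> ~ irreducible_elt x.
Proof.
move=> -> P0 Q0 [_ /(_ P Q erefl)].
by case=> /(rmorph_unit phi); rewrite ?P0 ?Q0 unitr0.
Qed.

Definition block_upper n (rlev clev : 'I_n -> nat) (a b : 'I_n) := (rlev a <= clev b)%N.

Section BlockUpper.
Variables (n : nat) (rlev clev : 'I_n -> nat) (o : 'I_n -> 'I_n -> bool).
Local Notation v := (block_upper rlev clev).
Local Notation supported := (supported v o).
Local Notation term_deg := (term_deg v).

Hypothesis o_subdiag : forall a b, o a b -> rlev a = (clev b).+1.

Lemma o_not_upper a b : o a b -> ~~ v a b.
Proof. by move/o_subdiag; rewrite /block_upper => ->; rewrite -ltnNge. Qed.

Lemma term_deg_swap_up s a a1 :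
  supported s -> o a1 (s a1) -> v a (s a1) -> v a1 (s a) -> v a (s a) ->
  exists2 t, supported t & term_deg t = (term_deg s).+1.
Proof.
move=> /forallP ss o1 va1 v1a vaa.
have nv1 : ~~ v a1 (s a1) := o_not_upper o1.
exists (tperm a a1 * s)%g.
  by apply/forallP => x; rewrite permM; case: tpermP => [->|->|_ _]; rewrite ?va1 ?v1a.
rewrite /term_deg (_ : [set x | _] = a1 |: [set x | v x (s x)]).
  by rewrite cardsU1 inE (negbTE nv1).
apply/setP => x; rewrite !inE permM.
case: tpermP => [->|->|_ /eqP/negbTE ->]; by rewrite ?va1 ?vaa ?orbT ?eqxx ?v1a.
Qed.

Hypothesis o_row : forall a b b', o a b -> o a b' -> b = b'.
Hypothesis o_col : forall a a' b, o a b -> o a' b -> a = a'.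

(* Route [a] through the one at [(a, c)] and send the row [a'] that used [c]
   to [s a], a variable entry as [rlev a' <= clev c < rlev a <= clev (s a)]. *)
Lemma term_deg_swap_down s a c :
  supported s -> o a c -> s a != c ->
  exists2 t, supported t & (term_deg t).+1 = term_deg s.
Proof.
move=> /forallP ss oac nsac; pose a' := (s^-1)%g c.
have sa' : s a' = c by rewrite /a' permKV.
have na' : a' != a by apply: contraNneq nsac => <-; rewrite sa'.
have vsa : v a (s a).
  by case/orP: (ss a) => // /(o_row oac) e; rewrite e eqxx in nsac.
have va'c : v a' c.
  by move: (ss a'); rewrite sa' => /orP[// | /(o_col oac) e]; rewrite e eqxx in na'.
have nvac : ~~ v a c := o_not_upper oac.
have va's : v a' (s a).
  by move: vsa va'c; rewrite /block_upper (o_subdiag oac); lia.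
exists (tperm a a' * s)%g.
  apply/forallP => x; rewrite permM.
  by case: tpermP => [->|->|_ _]; rewrite ?sa' ?oac ?orbT ?va's.
rewrite /term_deg (_ : [set x | _] = [set x | v x (s x)] :\ a).
  by rewrite (cardsD1 a [set x | v x (s x)]) inE vsa.
apply/setP => x; rewrite !inE permM.
case: tpermP => [->|->|/eqP/negbTE -> _];
  by rewrite ?eqxx ?sa' ?(negbTE nvac) ?na' ?va's.
Qed.

(* In M(i;j), [cols0] is column block 1 and [rows0] consists of row block 1
   and the rows of row block 2 meeting the 1s of I_{i_2,j_1}. *)
Definition cols0 := [set b | clev b == 0%N].
Definition rows0 := [set a | [exists b in cols0, v a b || o a b]].

Variables (K : fieldType) (M : 'M[{mpoly K[n * n]}]_n).
Hypothesis M_pattern :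
  forall a b, M a b = if v a b then 'X_(mxvec_index a b) else (o a b)%:R.

Lemma rows0_zero a b : a \notin rows0 -> b \in cols0 -> M a b = 0.
Proof.
move=> na b0; rewrite M_pattern.
case vab: (v a b); case oab: (o a b) => //; case/negP: na;
  by rewrite inE; apply/existsP; exists b; rewrite b0 vab ?oab.
Qed.

Section MaximalTerm.
Variables (sg : 'S_n) (a1 c1 : 'I_n).
Hypothesis sg_supp : supported sg.
Hypothesis sg_max : forall t, supported t -> (term_deg t <= term_deg sg)%N.
Hypothesis sg_ones : forall a c, o a c -> sg a = c.
Hypothesis o_a1c1 : o a1 c1.
Hypothesis c1_lev : clev c1 = 0%N.

Lemma max_term_maps_rows0 a : a \in rows0 -> sg a \in cols0.
Proof.
rewrite inE => /existsP [b /andP[b0 /orP[vab | oab]]]; last by rewrite (sg_ones oab).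
have a0 : rlev a = 0%N.
  by move: b0 vab; rewrite inE /block_upper => /eqP ->; rewrite leqn0 => /eqP.
rewrite inE; apply/eqP; case: (posnP (clev (sg a))) => [// | pos]; exfalso.
have a1_lev : rlev a1 = 1%N by rewrite (o_subdiag o_a1c1) c1_lev.
have [t tsupp tdeg] : exists2 t, supported t & term_deg t = (term_deg sg).+1.
  apply: (@term_deg_swap_up _ a a1);
  by rewrite // ?(sg_ones o_a1c1) /block_upper ?a0 ?a1_lev.
by have := sg_max tsupp; rewrite tdeg ltnn.
Qed.

Lemma card_rows0 : #|rows0| = #|cols0|.
Proof.
rewrite -(card_imset _ (@perm_inj _ sg)); apply: eq_card => b.
apply/imsetP/idP => [[a a0 ->] | b0]; first exact: max_term_maps_rows0.
exists ((sg^-1)%g b); last by rewrite permKV.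
rewrite inE; apply/existsP; exists b; rewrite b0 /=.
by have := forallP sg_supp ((sg^-1)%g b); rewrite permKV.
Qed.

Lemma max_term_not_irreducible x0 y0 :
  rlev x0 = 0%N -> clev y0 != 0%N -> (forall a, rlev a <= clev y0)%N ->
  ~ irreducible_elt (\det M).
Proof.
move=> x0_lev y0_lev y0_top.
pose phi : {rmorphism {mpoly K[n * n]} -> K} := meval (fun=> 0).
have var0 a b : v a b -> phi (M a b) = 0.
  by move=> vab; rewrite M_pattern vab /= mevalXU.
have x0_rows0 : x0 \in rows0.
  by rewrite inE; apply/existsP; exists c1; rewrite inE c1_lev /block_upper x0_lev.
have y0_cols0 : y0 \notin cols0 by rewrite inE.
have x0_row0 b : phi (M x0 b) = 0 by apply: var0; rewrite /block_upper x0_lev.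
have [P [Q [detM [P0 Q0]]]] := det_factor_vanishing card_rows0 rows0_zero
  x0_rows0 x0_row0 y0_cols0 (fun a => var0 a y0 (y0_top a)).
exact: vanishing_factors_not_irreducible detM P0 Q0.
Qed.

End MaximalTerm.

Lemma exists_submax_term sg a1 c1 x0 y0 :
  supported sg -> (forall t, supported t -> (term_deg t <= term_deg sg)%N) ->
  o a1 c1 -> clev c1 = 0%N ->
  rlev x0 = 0%N -> clev y0 != 0%N -> (forall a, rlev a <= clev y0)%N ->
  irreducible_elt (\det M) ->
  exists2 t, supported t & (term_deg t).+1 = term_deg sg.
Proof.
move=> sg_supp sg_max o1 c1_lev x0_lev y0_lev y0_top irr.
have [/existsP [a /existsP [c /andP[oac nsac]]] | ones] :=
  boolP [exists a, exists c, o a c && (sg a != c)].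
  exact: term_deg_swap_down oac nsac.
exfalso; apply: (max_term_not_irreducible sg_supp sg_max _ o1 c1_lev x0_lev)
  y0_lev y0_top irr.
move=> a c oac; apply/eqP; move: ones; rewrite negb_exists => /forallP /(_ a).
by rewrite negb_exists => /forallP /(_ c); rewrite oac negbK.
Qed.

End BlockUpper.

Definition col_level (j : seq nat) (b : nat) := ((size j).-1 - blk (rev j) b)%N.

Definition Mij_one (i j : seq nat) (a b : nat) :=
  (blk i a == (col_level j b).+1) &&
  (a - pre i (blk i a) == b - pre (rev j) (blk (rev j) b))%N.

Lemma Mij_one_level i j a b : Mij_one i j a b -> blk i a = (col_level j b).+1.
Proof. by case/andP => /eqP. Qed.

Section MijPattern.
Variables (K : fieldType) (i j : seq nat).
Hypothesis size_ij : size i = size j.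
Hypothesis i_pos : all (fun x => 0 < x)%N i.
Hypothesis j_pos : all (fun x => 0 < x)%N j.
Hypothesis sum_ij : (\sum_(x <- i) x)%N = (\sum_(x <- j) x)%N.
Local Notation N := (\sum_(x <- i) x)%N.

Lemma Mij_pattern (a b : 'I_N) :
  Mij K i j N a b =
    if block_upper (fun a : 'I_N => blk i a) (fun b : 'I_N => col_level j b) a b
    then 'X_(mxvec_index a b) else (Mij_one i j a b)%:R.
Proof.
rewrite /Mij mxE /block_upper /Mij_one /col_level.
by case: ifP => // _; case: eqP => //= _; case: eqP.
Qed.

Lemma blk_rev_lt (b : 'I_N) : (blk (rev j) b < size j)%N.
Proof. by rewrite -size_rev blk_lt_size // big_rev -sum_ij. Qed.

Lemma Mij_one_row (a b b' : 'I_N) : Mij_one i j a b -> Mij_one i j a b' -> b = b'.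
Proof using sum_ij.
move=> /andP[/eqP e1 /eqP e2] /andP[/eqP e1' /eqP e2'].
have eb : blk (rev j) b = blk (rev j) b'.
  have : col_level j b = col_level j b' by apply: succn_inj; rewrite -e1 -e1'.
  by move: (blk_rev_lt b) (blk_rev_lt b'); rewrite /col_level; clear -b; lia.
by apply/val_inj/(blk_offset_inj eb); rewrite -e2 -e2'.
Qed.

Lemma Mij_one_col (a a' b : 'I_N) : Mij_one i j a b -> Mij_one i j a' b -> a = a'.
Proof.
move=> /andP[/eqP e1 /eqP e2] /andP[/eqP e1' /eqP e2'].
have ea : blk i a = blk i a' by rewrite e1 e1'.
by apply/val_inj/(blk_offset_inj ea); rewrite e2 e2'.
Qed.

Lemma Mij_corner : (1 < size i)%N ->
  exists a1 c1 : 'I_N, Mij_one i j a1 c1 /\ col_level j c1 = 0%N.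
Proof.
move=> r2; have i1_pos := all_nthP 0%N i_pos 1%N r2.
have jr : ((size j).-1 < size (rev j))%N by rewrite size_rev -size_ij; lia.
have jr_pos : (0 < nth 0 (rev j) (size j).-1)%N.
  by apply: (all_nthP 0%N) jr; rewrite all_rev.
have a1_lt : (pre i 1 < N)%N := pre_lt_sum r2 i1_pos.
have c1_lt : (pre (rev j) (size j).-1 < N)%N.
  by have := pre_lt_sum jr jr_pos; rewrite big_rev -sum_ij.
have c1_blk := blk_pre jr jr_pos.
have c1_lev : col_level j (pre (rev j) (size j).-1) = 0%N.
  by rewrite /col_level c1_blk subnn.
exists (Ordinal a1_lt), (Ordinal c1_lt); split => //=.
by rewrite /Mij_one c1_lev blk_pre // c1_blk !subnn !eqxx.
Qed.

Lemma Mij_origin : (0 < size i)%N ->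
  exists x0 : 'I_N, blk i x0 = 0%N /\ col_level j x0 = (size j).-1.
Proof.
move=> r1; have i0_pos := all_nthP 0%N i_pos 0%N r1.
have jr : (0 < size (rev j))%N by rewrite size_rev -size_ij.
have jr_pos : (0 < nth 0 (rev j) 0)%N by apply: (all_nthP 0%N) jr; rewrite all_rev.
have x0_lt : (0 < N)%N by have := pre_lt_sum r1 i0_pos; rewrite pre0.
exists (Ordinal x0_lt) => /=; split; first by have := blk_pre r1 i0_pos; rewrite pre0.
by have := blk_pre jr jr_pos; rewrite pre0 /col_level => ->; rewrite subn0.
Qed.

End MijPattern.

Theorem corollary6p6 (K : fieldType) (i j : seq nat) :
  size i = size j ->
  all (fun x => 0 < x)%N i -> all (fun x => 0 < x)%N j ->
  (\sum_(x <- i) x)%N = (\sum_(x <- j) x)%N ->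
  let N := (\sum_(x <- i) x)%N in
  let g := \det (Mij K i j N) in
  g != 0 -> irreducible_elt g ->
  (size i = 1%N -> g \is homog mdeg) /\
  ((1 < size i)%N -> pihomog mdeg (msize g).-2 g != 0).
Proof.
move=> size_ij i_pos j_pos sum_ij N g g_nz g_irr.
have M_pattern := @Mij_pattern K i j.
have o_row := Mij_one_row sum_ij.
have rlev_lt (a : 'I_N) : (blk i a < size i)%N := blk_lt_size (ltn_ord a).
have [sg sg_supp sg_max] := exists_max_term M_pattern g_nz.
split => [r1 | r2].
  apply/homogP; exists N; apply: (det_pattern_homog M_pattern) => a b.
  by rewrite /block_upper /=; have := rlev_lt a; rewrite r1 ltnS leqn0 => /eqP ->.
have [a1 [c1 [o1 c1_lev]]] := Mij_corner size_ij i_pos j_pos sum_ij r2.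
have [x0 [x0_row x0_col]] := Mij_origin size_ij i_pos j_pos (ltnW r2).
have x0_top (a : 'I_N) : (blk i a <= col_level j x0)%N.
  by rewrite x0_col -size_ij; have := rlev_lt a; lia.
have x0_nz : col_level j x0 != 0%N by rewrite x0_col -size_ij; lia.
have [t t_supp t_deg] := exists_submax_term (@Mij_one_level i j) o_row
  (@Mij_one_col i j) M_pattern sg_supp sg_max o1 c1_lev x0_row x0_nz x0_top g_irr.
rewrite (msize_det_pattern o_row M_pattern sg_supp sg_max) -t_deg.
exact: (pihomog_det_pattern_neq0 o_row M_pattern t_supp).
Qed.
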